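(* Let $k\ge 2$ and $b>0$. There exists a constant $c>0$ depending only on $k$ and $b$ such that for every finite set $Z$ and every $S\subseteq\{0,1,\dots,k\}^Z$ with $F_S\ge k^{b|Z|}$, there exists $W\subseteq Z$ with $|W|\ge c|Z|$ and $S|_W\supseteq\{1,\dots,k\}^W$.
   Context: For a finite set $Z$, let ${\mathcal U}$ be the cover of $\{0,1,\dots,k\}^Z$ consisting of all sets of the form $\prod_{z\in Z}\{i_z\}^{\rm c}$ (complement taken in $\{0,1,\dots,k\}$) with $1\le i_z\le k$ for each $z\in Z$. For $S\subseteq\{0,1,\dots,k\}^Z$, $F_S$ denotes the minimal number of sets in ${\mathcal U}$ needed to cover $S$. $S|_W$ denotes the set of restrictions to $W$ of the elements of $S$. *)

From mathcomp Require Import all_boot.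
From Stdlib Require Import Reals.
Set Implicit Arguments. Unset Strict Implicit. Unset Printing Implicit Defensive.

(* Points of {0,1,...,k}^Z are finite functions Z -> 'I_k.+1.
   A set of the cover U is indexed by i : Z -> {1..k}, i.e. a finite function
   Z -> 'I_k.+1 with i z != 0 for all z; it is the product of complements
   prod_z {i z}^c = [set x | forall z, x z != i z]. *)

Definition Uset (Z : finType) (k : nat) (i : {ffun Z -> 'I_k.+1})
  : {set {ffun Z -> 'I_k.+1}} :=
  [set x : {ffun Z -> 'I_k.+1} | [forall z, x z != i z]].

Definition Uindex (Z : finType) (k : nat) (i : {ffun Z -> 'I_k.+1}) : bool :=
  [forall z, i z != ord0].

Definition Ucover (Z : finType) (k : nat) (S : {set {ffun Z -> 'I_k.+1}})
  (C : {set {ffun Z -> 'I_k.+1}}) : bool :=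
  [forall i in C, Uindex i] &&
  (S \subset \bigcup_(i in C) Uset i).

(* The default value
   #|{ffun Z -> 'I_k.+1}| of the big minimum is an upper bound on the size
   of the cover by all of U (which exists when k >= 1 ... and covers everything
   when k >= 2), so it never affects the value when k >= 2. *)
Definition FS (Z : finType) (k : nat) (S : {set {ffun Z -> 'I_k.+1}}) : nat :=
  \big[minn/#|{ffun Z -> 'I_k.+1}|]_(C : {set {ffun Z -> 'I_k.+1}} | Ucover S C) #|C|.

(* S|_W contains {1,...,k}^W: every g : W -> {1..k} is the restriction to W
   of some element of S (g is represented by a function on Z whose values
   outside W are irrelevant). *)
Definition restr_contains_full (Z : finType) (k : nat)
  (S : {set {ffun Z -> 'I_k.+1}}) (W : {set Z}) : Prop :=
  forall g : {ffun Z -> 'I_k.+1}, (forall z, z \in W -> g z != ord0) ->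
    exists2 x, x \in S & forall z, z \in W -> x z = g z.

(* Write F_D(S) for the covering number of S computed on the coordinates in D
   only, and Sh_D(S) for the family of subsets of D shattered by S.  For z0 in D
   and a <> 0 we have F_D(S) <= F_(D-z0)(S) + F_(D-z0)(S_a), where S_a is the slice
   {x in S | x z0 = a}.  So either q F_D(S) <= (q+1) F_(D-z0)(S), or every slice
   needs F_D(S)/(q+1) sets.  A set shattered by a slice is shattered by S inside
   D-z0, and a set shattered by all k slices extends by z0; counting with
   multiplicity, the smallest slice shatters at most (k-1)/k of the sets
   shattered by S.  With
   p = q(k-1), Bernoulli's inequality gives q ((k-1)/k)^p <= 1, and induction on
   |D| yields q^|D| F_D(S) <= |Sh_D(S)|^p (q+1)^|D|.  If no shattered set has more
   than m elements, |Sh_Z(S)| r^(n-m) <= (r+1)^n; taking logarithms, with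
   F_Z(S) >= k^(bn) and q, r large enough, forces m >= c n. *)

From Stdlib Require Import Reals Lra.
From mathcomp Require Import all_boot zify.
Set Implicit Arguments. Unset Strict Implicit. Unset Printing Implicit Defensive.

Lemma bigmin_leq (I : finType) (P : pred I) (F : I -> nat) d j :
  P j -> \big[minn/d]_(i | P i) F i <= F j.
Proof.
move=> Pj; rewrite -big_filter.
have : j \in [seq i <- index_enum I | P i] by rewrite mem_filter Pj mem_index_enum.
elim: [seq i <- _ | _] => //= i s IHs; rewrite inE big_cons.
by case/orP => [/eqP <-|/IHs]; [exact: geq_minl | exact/leq_trans/geq_minr].
Qed.

Lemma bigmin_attained (I : finType) (P : pred I) (F : I -> nat) d j :
  P j -> F j <= d -> exists2 i, P i & \big[minn/d]_(i | P i) F i = F i.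
Proof.
move=> Pj Fjd.
have [m_d|//] : \big[minn/d]_(i | P i) F i = d \/
    exists2 i, P i & \big[minn/d]_(i | P i) F i = F i.
  elim/big_rec: _ => [|i m Pi [->|[i' Pi' ->]]]; first by left.
  - by rewrite /minn; case: ltnP => _; [right; exists i | left].
  - by right; rewrite /minn; case: ltnP => _; [exists i | exists i'].
by exists j => //; apply/eqP; rewrite eqn_leq bigmin_leq //= m_d.
Qed.

Lemma sum_card_le_bigcup_bigcap (I T : finType) (A : I -> {set T}) : 1 < #|I| ->
  \sum_i #|A i| <= #|I|.-1 * (#|\bigcup_i A i| + #|\bigcap_i A i|).
Proof.
move=> I_gt1.
have cardE (B : {set T}) : #|B| = \sum_t (t \in B : nat).
  by rewrite -sum1_card big_mkcond.
rewrite (eq_bigr (fun i => \sum_t (t \in A i : nat))) => [|i _]; last exact: cardE.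
rewrite exchange_big !cardE -big_split big_distrr /=; apply: leq_sum => t _.
have -> : \sum_i (t \in A i : nat) = #|[set i | t \in A i]|.
  by rewrite -sum1_card [RHS]big_mkcond; apply: eq_bigr => i _; rewrite inE.
have cup_gt0 : (t \in \bigcup_i A i) = (0 < #|[set i | t \in A i]|).
  apply/bigcupP/card_gt0P => [[i _ ti]|[i]]; first by exists i; rewrite inE.
  by rewrite inE => ti; exists i.
have cap_T : (t \in \bigcap_i A i) = ([set i | t \in A i] == setT).
  apply/bigcapP/eqP => [tA|BT i _]; last by move: (in_setT i); rewrite -BT inE.
  by apply/setP => i; rewrite !inE tA.
rewrite cup_gt0 cap_T; set B := [set i | t \in A i].
have [->|BnT] := eqVneq B setT.
  by rewrite cardsT (ltnW I_gt1); move: I_gt1; case: #|I| => // n; lia.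
have : #|B| < #|I| by rewrite -cardsT proper_card ?properT.
by case: posnP => [->|_] //; rewrite addn0 muln1; case: #|I| => // n; lia.
Qed.

Lemma sum_expn_card_setC (T : finType) r :
  \sum_(W : {set T}) r ^ (#|T| - #|W|) = r.+1 ^ #|T|.
Proof.
rewrite -addn1 expnDn.
rewrite (partition_big (fun W : {set T} => inord #|W| : 'I_#|T|.+1) xpredT) //=.
apply: eq_bigr => j _; rewrite exp1n muln1.
rewrite (eq_bigl (fun W : {set T} => #|W| == j)) => [|W]; last first.
  by rewrite -val_eqE /= inordK // ltnS max_card.
rewrite (eq_bigr (fun _ => r ^ (#|T| - j))) => [|W /eqP ->] //.
by rewrite sum_nat_const -card_draws; congr (_ * _); apply: eq_card => W; rewrite inE.
Qed.

Lemma card_small_sets (T : finType) (F : {set {set T}}) m r : 0 < r ->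
  (forall W, W \in F -> #|W| <= m) -> #|F| * r ^ (#|T| - m) <= r.+1 ^ #|T|.
Proof.
move=> r_gt0 F_small; rewrite -sum_expn_card_setC -sum_nat_const.
apply: (@leq_trans (\sum_(W in F) r ^ (#|T| - #|W|))).
  by apply: leq_sum => W WF; rewrite leq_pexp2l // leq_sub2l // F_small.
by rewrite [leqRHS](bigID (fun W => W \in F)) leq_addr.
Qed.

Lemma leq_wexp2r m n e : m <= n -> m ^ e <= n ^ e.
Proof. by move=> le_mn; case: e => // e; rewrite leq_exp2r. Qed.

Lemma bernoulli_expn a p : a ^ p * (a + p) <= a * a.+1 ^ p.
Proof.
elim: p => [|p IHp]; first by rewrite muln1 addn0 mul1n.
have := @leq_wexp2r a a.+1 p (leqnSn a).
rewrite !expnS; nia.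
Qed.

Lemma expn_pred_ratio q k : 1 < k ->
  q * k.-1 ^ (q * k.-1) <= k ^ (q * k.-1).
Proof.
case: k => // a a_gt0 /=; rewrite -(leq_pmul2l a_gt0).
apply: leq_trans (bernoulli_expn a (q * a)); nia.
Qed.

Lemma expn_le_of_pred_ratio k q p f s : 0 < k ->
  q * k.-1 ^ p <= k ^ p -> k * f <= k.-1 * s -> q * f ^ p <= s ^ p.
Proof.
move=> k_gt0 ratio kf_le; rewrite -(@leq_pmul2l (k ^ p)) ?expn_gt0 ?k_gt0 //.
rewrite mulnCA -expnMn (leq_trans (leq_mul (leqnn q) (leq_wexp2r p kf_le))) //.
by rewrite expnMn mulnA leq_mul2r ratio orbT.
Qed.

Section Covers.
Variables (Z : finType) (k : nat).
Hypothesis k_gt1 : 1 < k.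
Local Notation point := {ffun Z -> 'I_k.+1}.

Definition avoids_on (D : {set Z}) (i x : point) : bool :=
  [forall z in D, x z != i z].

Definition covers_on (D : {set Z}) (S C : {set point}) : bool :=
  [forall i in C, Uindex i] && [forall x in S, [exists i in C, avoids_on D i x]].

Definition FS_on (D : {set Z}) (S : {set point}) : nat :=
  \big[minn/#|point|]_(C : {set point} | covers_on D S C) #|C|.

Lemma FS_setT (S : {set point}) : FS S = FS_on setT S.
Proof.
apply: eq_bigl => C; congr (_ && _).
apply/subsetP/forall_inP => [S_cov x /S_cov /bigcupP[i iC xi]|S_cov x /S_cov].
  apply/exists_inP; exists i => //; apply/forall_inP => z _.
  by move: xi; rewrite inE => /forallP.
case/exists_inP => i iC /forall_inP x_av; apply/bigcupP; exists i => //.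
by rewrite inE; apply/forallP => z; apply: x_av.
Qed.

Lemma FS_on_le D S C : covers_on D S C -> FS_on D S <= #|C|.
Proof. exact: bigmin_leq. Qed.

Lemma covers_onS D (S S' C : {set point}) :
  S \subset S' -> covers_on D S' C -> covers_on D S C.
Proof.
move=> /subsetP sSS' /andP[C_ix /forall_inP S'_cov]; apply/andP; split => //.
by apply/forall_inP => x /sSS'; apply: S'_cov.
Qed.

Lemma covers_onU D (S1 S2 C1 C2 : {set point}) :
  covers_on D S1 C1 -> covers_on D S2 C2 -> covers_on D (S1 :|: S2) (C1 :|: C2).
Proof.
move=> /andP[/forall_inP C1_ix /forall_inP S1_cov].
move=> /andP[/forall_inP C2_ix /forall_inP S2_cov].
apply/andP; split; apply/forall_inP => x; rewrite inE => /orP[xS|xS].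
- exact: C1_ix.
- exact: C2_ix.
- have /exists_inP[i iC x_av] := S1_cov x xS.
  by apply/exists_inP; exists i; rewrite ?inE ?iC.
- have /exists_inP[i iC x_av] := S2_cov x xS.
  by apply/exists_inP; exists i; rewrite ?inE ?iC ?orbT.
Qed.

Definition other (a : 'I_k.+1) : 'I_k.+1 := if a == inord 1 then inord 2 else inord 1.

Lemma other_neq0 a : other a != ord0.
Proof.
by rewrite /other; case: (a == _); rewrite -val_eqE /= inordK // ltnS ltnW.
Qed.

Lemma other_neq a : other a != a.
Proof.
rewrite /other; have [->|a_neq] := eqVneq a (inord 1); last by rewrite eq_sym.
by rewrite -val_eqE /= !inordK // ltnS ltnW.
Qed.

Definition avoider (x : point) : point := [ffun z => other (x z)].

Lemma Uindex_avoider x : Uindex (avoider x).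
Proof. by apply/forallP => z; rewrite ffunE other_neq0. Qed.

Lemma avoids_on_avoider D x : avoids_on D (avoider x) x.
Proof. by apply/forall_inP => z _; rewrite ffunE eq_sym other_neq. Qed.

Lemma covers_on_avoiders D (S : {set point}) : covers_on D S (avoider @: S).
Proof.
apply/andP; split; first by apply/forall_inP => _ /imsetP[x _ ->]; apply: Uindex_avoider.
apply/forall_inP => x xS.
by apply/exists_inP; exists (avoider x); [apply: imset_f | apply: avoids_on_avoider].
Qed.

Lemma FS_on_le_card D S : FS_on D S <= #|S|.
Proof. exact: leq_trans (FS_on_le (covers_on_avoiders D S)) (leq_imset_card _ _). Qed.

Lemma FS_on_attained D S : exists2 C, covers_on D S C & FS_on D S = #|C|.
Proof.
apply: (bigmin_attained (j := avoider @: S)); first exact: covers_on_avoiders.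
exact: max_card.
Qed.

Lemma FS_on_set0 S : FS_on set0 S <= 1.
Proof.
rewrite -(cards1 (avoider [ffun=> ord0])); apply: FS_on_le.
apply/andP; split; first by apply/forall_inP => i /set1P ->; apply: Uindex_avoider.
apply/forall_inP => x _.
apply/exists_inP; exists (avoider [ffun=> ord0]); first exact: set11.
by apply/forall_inP => z; rewrite inE.
Qed.

Definition fupd (i : point) (z0 : Z) (v : 'I_k.+1) : point :=
  [ffun z => if z == z0 then v else i z].

Definition slice (S : {set point}) (z0 : Z) (a : 'I_k.+1) : {set point} :=
  [set x in S | x z0 == a].

Lemma covers_on_fupd D (S C : {set point}) z0 (v : 'I_k.+1) : v != ord0 ->
  covers_on (D :\ z0) S C -> {in S, forall x : point, x z0 != v} ->
  covers_on D S [set fupd i z0 v | i in C].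
Proof.
move=> v_neq0 /andP[/forall_inP C_ix /forall_inP S_cov] Sz0.
apply/andP; split.
  apply/forall_inP => _ /imsetP[i iC ->]; apply/forallP => z.
  by rewrite ffunE; case: (z == z0) => //; apply: (forallP (C_ix i iC) z).
apply/forall_inP => x xS.
have /exists_inP[i iC /forall_inP x_av] := S_cov x xS.
apply/exists_inP; exists (fupd i z0 v); first exact: imset_f.
apply/forall_inP => z zD; rewrite ffunE; have [->|z_neq] := eqVneq z z0; first exact: Sz0.
by apply: x_av; rewrite !inE z_neq.
Qed.

Lemma FS_on_split D S z0 a : a != ord0 ->
  FS_on D S <= FS_on (D :\ z0) S + FS_on (D :\ z0) (slice S z0 a).
Proof.
move=> a_neq0.
have [C1 C1_cov ->] := FS_on_attained (D :\ z0) S.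
have [C2 C2_cov ->] := FS_on_attained (D :\ z0) (slice S z0 a).
pose S1 := [set x in S | x z0 != a].
have S_split : S = S1 :|: slice S z0 a.
  by apply/setP => x; rewrite !inE; case: (x \in S); rewrite ?andbF // orNb.
have C1_cov' : covers_on D S1 [set fupd i z0 a | i in C1].
  apply: covers_on_fupd => //; last by move=> x; rewrite inE => /andP[].
  by apply: covers_onS C1_cov; apply/subsetP => x; rewrite inE => /andP[].
have C2_cov' : covers_on D (slice S z0 a) [set fupd i z0 (other a) | i in C2].
  apply: covers_on_fupd => //; first exact: other_neq0.
  by move=> x; rewrite inE => /andP[_ /eqP ->]; rewrite eq_sym other_neq.
rewrite {1}S_split; apply: leq_trans (FS_on_le (covers_onU C1_cov' C2_cov')) _.
by rewrite (leq_trans (leq_card_setU _ _).1) // leq_add ?leq_imset_card.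
Qed.

Definition shatters (S : {set point}) (W : {set Z}) : bool :=
  [forall g : point, [forall z in W, g z != ord0] ==>
     [exists x in S, [forall z in W, x z == g z]]].

Definition shattered (D : {set Z}) (S : {set point}) : {set {set Z}} :=
  [set W : {set Z} | (W \subset D) && shatters S W].

Lemma shatters_restr_contains_full S W : shatters S W -> restr_contains_full S W.
Proof.
move=> /forallP S_sh g g_W.
have /exists_inP[x xS /forall_inP x_g] := implyP (S_sh g) (introT forall_inP g_W).
by exists x => // z zW; apply/eqP/x_g.
Qed.

Lemma shatters0 (S : {set point}) : S != set0 -> shatters S set0.
Proof.
case/set0Pn => x xS; apply/forallP => g; apply/implyP => _.
by apply/exists_inP; exists x => //; apply/forall_inP => z; rewrite inE.
Qed.

Lemma shattersS (S S' : {set point}) W : S \subset S' -> shatters S W -> shatters S' W.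
Proof.
move=> /subsetP sSS' /forallP S_sh; apply/forallP => g; apply/implyP => g_W.
have /exists_inP[x xS x_g] := implyP (S_sh g) g_W.
by apply/exists_inP; exists x; [apply: sSS' | ].
Qed.

Lemma shattered_subD (D D' : {set Z}) (S : {set point}) :
  D' \subset D -> shattered D' S \subset shattered D S.
Proof.
move=> sD'D; apply/subsetP => W; rewrite !inE => /andP[sWD' ->].
by rewrite (subset_trans sWD' sD'D).
Qed.

Lemma shattered_subS (D : {set Z}) (S S' : {set point}) :
  S \subset S' -> shattered D S \subset shattered D S'.
Proof.
by move=> sSS'; apply/subsetP => W; rewrite !inE => /andP[-> /(shattersS sSS')].
Qed.

Lemma shatters_setU1 (S : {set point}) z0 W :
  (forall a : 'I_k, shatters (slice S z0 (lift ord0 a)) W) -> shatters S (z0 |: W).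
Proof.
move=> slices_sh; apply/forallP => g; apply/implyP => /forall_inP g_W.
have [a g_z0|g_z0] := unliftP ord0 (g z0); last first.
  by have := g_W z0 (setU11 _ _); rewrite g_z0 eqxx.
have g_W' : [forall z in W, g z != ord0].
  by apply/forall_inP => z zW; apply: g_W; rewrite setU1r.
have /exists_inP[x] := implyP (forallP (slices_sh a) g) g_W'.
rewrite inE => /andP[xS /eqP x_z0] /forall_inP x_g; apply/exists_inP; exists x => //.
by apply/forall_inP => z /setU1P[->|/x_g //]; rewrite x_z0 g_z0.
Qed.

Lemma card_shattered_slices (D : {set Z}) (S : {set point}) z0 : z0 \in D ->
  #|\bigcup_(a < k) shattered (D :\ z0) (slice S z0 (lift ord0 a))| +
  #|\bigcap_(a < k) shattered (D :\ z0) (slice S z0 (lift ord0 a))|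
    <= #|shattered D S|.
Proof.
move=> z0D; pose A a := shattered (D :\ z0) (slice S z0 (lift ord0 a)).
change (#|\bigcup_a A a| + #|\bigcap_a A a| <= #|shattered D S|).
have cup_sub : \bigcup_a A a \subset shattered (D :\ z0) S.
  by apply/bigcupsP => a _; apply/shattered_subS/subsetP => x; rewrite inE => /andP[].
have cap_sub W : W \in \bigcap_a A a ->
    W \subset D :\ z0 /\ forall a, shatters (slice S z0 (lift ord0 a)) W.
  move=> /bigcapP W_cap; split.
    by have := W_cap (Ordinal (ltnW k_gt1)) isT; rewrite inE => /andP[].
  by move=> a; have := W_cap a isT; rewrite inE => /andP[].
have z0_notin W : W \in \bigcap_a A a -> z0 \notin W.
  by case/cap_sub => /subsetP sWD _; apply/negP => /sWD; rewrite !inE eqxx.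
pose B := [set z0 |: W | W in \bigcap_a A a].
have card_B : #|B| = #|\bigcap_a A a|.
  apply: card_in_imset => W1 W2 W1_cap W2_cap eW.
  by rewrite -(setU1K (z0_notin _ W1_cap)) eW setU1K ?z0_notin.
have disj : [disjoint shattered (D :\ z0) S & B].
  rewrite -setI_eq0; apply/eqP/setP => W; rewrite !inE.
  apply/negP => /andP[/andP[sWD _] /imsetP[W' _ eW]].
  by move/subsetP: sWD => /(_ z0); rewrite eW setU11 !inE eqxx => /(_ isT).
have sub : shattered (D :\ z0) S :|: B \subset shattered D S.
  rewrite subUset (shattered_subD _ (subsetDl _ _)) /=.
  apply/subsetP => _ /imsetP[W W_cap ->]; have [sWD W_sh] := cap_sub W W_cap.
  rewrite inE shatters_setU1 // andbT subUset sub1set z0D /=.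
  exact: subset_trans sWD (subsetDl _ _).
apply: leq_trans (subset_leq_card sub).
by rewrite -card_B cardsU disjoint_setI0 // cards0 subn0 leq_add2r subset_leq_card.
Qed.

Lemma small_slice_shattered (D : {set Z}) (S : {set point}) z0 : z0 \in D ->
  exists a : 'I_k,
    k * #|shattered (D :\ z0) (slice S z0 (lift ord0 a))| <= k.-1 * #|shattered D S|.
Proof.
move=> z0D; pose A a := shattered (D :\ z0) (slice S z0 (lift ord0 a)).
have [a _ a_min] := @arg_minnP _ (Ordinal (ltnW k_gt1)) xpredT (fun a => #|A a|) isT.
exists a; apply: (@leq_trans (\sum_b #|A b|)).
  by rewrite -{1}(card_ord k) -sum_nat_const; apply: leq_sum => b _; apply: a_min.
apply: leq_trans (sum_card_le_bigcup_bigcap _ _) _; rewrite card_ord //.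
by rewrite leq_mul2l card_shattered_slices ?orbT.
Qed.

Lemma FS_on_shattered q p : 0 < q -> q * k.-1 ^ p <= k ^ p ->
  forall (D : {set Z}) (S : {set point}),
  q ^ #|D| * FS_on D S <= #|shattered D S| ^ p * q.+1 ^ #|D|.
Proof.
move=> q_gt0 ratio D; have [n] := ubnP #|D|; elim: n D => // n IHn D.
rewrite ltnS => le_Dn S; have [->|[z0 z0D]] := set_0Vmem D.
  rewrite cards0 !expn0 mul1n muln1; have [->|S_neq0] := eqVneq S set0.
    by apply: leq_trans (FS_on_le_card _ _) _; rewrite cards0.
  apply: leq_trans (FS_on_set0 S) _; rewrite expn_gt0 card_gt0; apply/orP; left.
  by apply/set0Pn; exists set0; rewrite inE sub0set shatters0.
have card_D : #|D| = #|D :\ z0|.+1 by rewrite (cardsD1 z0) z0D.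
have [a slice_small] := small_slice_shattered S z0D.
have IH := IHn (D :\ z0); rewrite -ltnS -card_D in IH; have {}IH := IH le_Dn.
set F := FS_on D S; set F' := FS_on (D :\ z0) S.
set Fa := FS_on (D :\ z0) (slice S z0 (lift ord0 a)).
have F_split : F <= F' + Fa by apply: FS_on_split; rewrite eq_sym neq_lift.
have [F_le|F_le] : q * F <= q.+1 * F' \/ F <= q.+1 * Fa by nia.
  have Sh_le := leq_wexp2r p (subset_leq_card (shattered_subD S (subsetDl D [set z0]))).
  have := leq_mul (leqnn (q ^ #|D :\ z0|)) F_le.
  have := leq_mul (leqnn q.+1) (IH S).
  have := leq_mul Sh_le (leqnn (q.+1 * q.+1 ^ #|D :\ z0|)).
  rewrite card_D !expnS; nia.
have := leq_mul (leqnn (q * q ^ #|D :\ z0|)) F_le.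
have := leq_mul (leqnn (q * q.+1)) (IH (slice S z0 (lift ord0 a))).
have := leq_mul (expn_le_of_pred_ratio (ltnW k_gt1) ratio slice_small)
  (leqnn (q.+1 * q.+1 ^ #|D :\ z0|)).
rewrite card_D !expnS; nia.
Qed.

Lemma FS_large_shattered (S : {set point}) q p r :
  0 < q -> q * k.-1 ^ p <= k ^ p -> 0 < r -> 0 < FS S ->
  exists W, shatters S W /\
    q ^ #|Z| * FS S * r ^ ((#|Z| - #|W|) * p) <= r.+1 ^ (#|Z| * p) * q.+1 ^ #|Z|.
Proof.
move=> q_gt0 ratio r_gt0 FS_gt0.
have S_neq0 : S != set0.
  by rewrite -card_gt0 (leq_trans FS_gt0) // FS_setT FS_on_le_card.
have set0_sh : set0 \in shattered setT S by rewrite inE sub0set shatters0.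
have [W W_sh W_max] :=
  @arg_maxnP _ set0 (fun W => W \in shattered setT S) (fun W => #|W|) set0_sh.
exists W; split; first by move: W_sh; rewrite inE => /andP[].
have main := FS_on_shattered q_gt0 ratio setT S.
rewrite cardsT -FS_setT in main.
have count := card_small_sets r_gt0 W_max.
rewrite !expnM; apply: leq_trans (leq_mul main (leqnn _)) _.
by rewrite mulnAC -expnMn leq_mul2r (leq_wexp2r p count) orbT.
Qed.

End Covers.

Local Open Scope R_scope.

Lemma INR_gt0 n : (0 < n)%nat -> 0 < INR n.
Proof. by move=> /ltP; apply: lt_0_INR. Qed.

Lemma INR_expn a n : INR (a ^ n) = INR a ^ n.
Proof. by elim: n => [|n IHn] //; rewrite expnS mult_INR IHn. Qed.

Lemma ln_le x y : 0 < x -> x <= y -> ln x <= ln y.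
Proof. by move=> x_gt0 [/(ln_increasing _ _ x_gt0)/Rlt_le|->] //; apply: Rle_refl. Qed.

Lemma ln_INR_gt0 n : (1 < n)%nat -> 0 < ln (INR n).
Proof. by move=> /ltP/(lt_INR 1) /= n_gt1; rewrite -ln_1; apply: ln_increasing; lra. Qed.

Lemma ln_INR_mul a b : (0 < a)%nat -> (0 < b)%nat ->
  ln (INR (a * b)) = ln (INR a) + ln (INR b).
Proof. by move=> a_gt0 b_gt0; rewrite mult_INR ln_mult //; apply: INR_gt0. Qed.

Lemma ln_INR_expn a n : (0 < a)%nat -> ln (INR (a ^ n)) = INR n * ln (INR a).
Proof. by move=> a_gt0; rewrite INR_expn ln_pow //; apply: INR_gt0. Qed.

Lemma ln_succ_sub_le q : (0 < q)%nat -> ln (INR q.+1) - ln (INR q) <= / INR q.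
Proof.
move=> /INR_gt0 q_gt0; have inv_gt0 := Rinv_0_lt_compat _ q_gt0.
have -> : INR q.+1 = INR q * (1 + / INR q) by rewrite S_INR; field; lra.
rewrite ln_mult ?ln_exp; [|lra|lra].
suff : ln (1 + / INR q) <= / INR q by lra.
by rewrite -{2}(ln_exp (/ INR q)); apply: ln_le; [lra | apply: exp_ineq1_le].
Qed.

Lemma ln_le_of_expn_bound q p r n m F : (0 < q)%nat -> (0 < r)%nat ->
  (0 < F)%nat -> (m <= n)%nat ->
  (q ^ n * F * r ^ ((n - m) * p) <= r.+1 ^ (n * p) * q.+1 ^ n)%nat ->
  ln (INR F) <= INR n * (/ INR q + INR p / INR r) + INR m * INR p * ln (INR r).
Proof.
move=> q_gt0 r_gt0 F_gt0 le_mn /leP/le_INR/ln_le bound.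
have lhs_gt0 : (0 < q ^ n * F * r ^ ((n - m) * p))%nat.
  by rewrite !muln_gt0 !expn_gt0 q_gt0 r_gt0 F_gt0.
move: (bound (INR_gt0 lhs_gt0)).
rewrite !ln_INR_mul ?ln_INR_expn ?muln_gt0 ?expn_gt0 ?q_gt0 ?r_gt0 ?F_gt0 //.
rewrite !mult_INR minus_INR; last exact/leP.
have n_ge0 := pos_INR n; have np_ge0 := Rmult_le_pos _ _ n_ge0 (pos_INR p).
have := Rmult_le_compat_l _ _ _ n_ge0 (ln_succ_sub_le q_gt0).
have := Rmult_le_compat_l _ _ _ np_ge0 (ln_succ_sub_le r_gt0).
rewrite /Rdiv; lra.
Qed.

Lemma linear_lower_bound L q p r n m F : 0 < L -> (0 < q)%nat -> (0 < p)%nat ->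
  (1 < r)%nat -> (0 < F)%nat -> (m <= n)%nat ->
  / INR q + INR p / INR r <= 2 * (L / 3) -> L * INR n <= ln (INR F) ->
  (q ^ n * F * r ^ ((n - m) * p) <= r.+1 ^ (n * p) * q.+1 ^ n)%nat ->
  L / (3 * INR p * ln (INR r)) * INR n <= INR m.
Proof.
move=> L_gt0 q_gt0 /INR_gt0 p_gt0 r_gt1 F_gt0 le_mn err_le ln_F_ge bound.
have := ln_le_of_expn_bound q_gt0 (ltnW r_gt1) F_gt0 le_mn bound.
have := Rmult_le_compat_l _ _ _ (pos_INR n) err_le.
have ln_r_gt0 := ln_INR_gt0 r_gt1; have den_gt0 : 0 < 3 * INR p * ln (INR r) by nra.
move=> err_n ln_F_le; apply: (Rmult_le_reg_l _ _ _ den_gt0).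
have -> : 3 * INR p * ln (INR r) * (L / (3 * INR p * ln (INR r)) * INR n) = L * INR n.
  by field; lra.
lra.
Qed.

Lemma INR_div_succ_mul_le p q : (0 < q)%nat ->
  INR p / INR (p * q).+1 <= / INR q.
Proof.
move=> /INR_gt0 q_gt0; have r_gt0 := INR_gt0 (ltn0Sn (p * q)).
apply: (Rmult_le_reg_l (INR q * INR (p * q).+1)); first nra.
have -> : INR q * INR (p * q).+1 * (INR p / INR (p * q).+1) = INR p * INR q.
  by field; lra.
have -> : INR q * INR (p * q).+1 * / INR q = INR (p * q).+1 by field; lra.
by rewrite S_INR mult_INR; lra.
Qed.

Theorem lemma3p3 (k : nat) (b : R) :
  (2 <= k)%nat -> 0 < b ->
  exists c : R, 0 < c /\
    forall (Z : finType) (S : {set {ffun Z -> 'I_k.+1}}),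
      Rpower (INR k) (b * INR #|Z|) <= INR (FS S) ->
      exists W : {set Z}, c * INR #|Z| <= INR #|W| /\ restr_contains_full S W.
Proof.
move=> k_gt1 b_gt0; set L := b * ln (INR k).
have L_gt0 : 0 < L by apply: Rmult_lt_0_compat => //; apply: ln_INR_gt0.
have [q [inv_q /ltP q_gt0]] := archimed_cor1 (L / 3) ltac:(lra).
set p := (q * k.-1)%nat; set r := (p * q).+1.
have p_gt0 : (0 < p)%nat by rewrite muln_gt0 q_gt0 -subn1 subn_gt0.
have r_gt1 : (1 < r)%nat by rewrite ltnS muln_gt0 p_gt0.
have err_le : / INR q + INR p / INR r <= 2 * (L / 3).
  by have := INR_div_succ_mul_le p q_gt0; rewrite -/r; lra.
exists (L / (3 * INR p * ln (INR r))); split.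
  apply: Rdiv_lt_0_compat => //.
  by have := Rmult_lt_0_compat _ _ (INR_gt0 p_gt0) (ln_INR_gt0 r_gt1); lra.
move=> Z S FS_large; have FS_gt0 : (0 < FS S)%nat.
  by apply/ltP/(INR_lt 0)/(Rlt_le_trans _ _ _ (exp_pos _) FS_large).
have [W [W_sh bound]] :=
  FS_large_shattered k_gt1 q_gt0 (expn_pred_ratio q k_gt1) (ltnW r_gt1) FS_gt0.
exists W; split; last exact: shatters_restr_contains_full.
apply: (linear_lower_bound L_gt0 q_gt0 p_gt0 r_gt1 FS_gt0 (max_card _) err_le _ bound).
by have := ln_le (exp_pos _) FS_large; rewrite ln_Rpower /L; lra.
Qed.
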